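(* Let $M$ be the free $\mathbb{Z}[p^{\pm1}]$-module with free basis $e_1,\dots,e_n,f_1,\dots,f_n$. For $i=1,\dots,n-1$ define module automorphisms $\Theta(\sigma_i):e_i\mapsto e_{i+1}+pf_{i+1},\ e_{i+1}\mapsto e_i-pf_{i+1}$ and $\Theta(\rho_i):e_i\mapsto e_{i+1},\ e_{i+1}\mapsto e_i,\ f_i\mapsto f_{i+1},\ f_{i+1}\mapsto f_i$, all other basis elements being fixed. Then this assignment extends to a linear representation $\Theta:FVB_n\to{\rm Aut}(M)$, and this representation does not preserve the forbidden relations, i.e. for $n\ge3$ and $i=1,\dots,n-2$, $\Theta(\rho_i\sigma_{i+1}\sigma_i)\ne\Theta(\sigma_{i+1}\sigma_i\rho_{i+1})$.
   Context: $FVB_n$ is the flat virtual braid group: generators $\sigma_1,\dots,\sigma_{n-1},\rho_1,\dots,\rho_{n-1}$, relations $\sigma_i\sigma_j=\sigma_j\sigma_i$, $\rho_i\rho_j=\rho_j\rho_i$, $\sigma_i\rho_j=\rho_j\sigma_i$ for $|i-j|\ge2$; $\sigma_i\sigma_{i+1}\sigma_i=\sigma_{i+1}\sigma_i\sigma_{i+1}$; $\rho_i\rho_{i+1}\rho_i=\rho_{i+1}\rho_i\rho_{i+1}$; $\rho_i\rho_{i+1}\sigma_i=\sigma_{i+1}\rho_i\rho_{i+1}$; $\rho_i^2=\sigma_i^2=1$. The forbidden relations are $\rho_i\sigma_{i+1}\sigma_i=\sigma_{i+1}\sigma_i\rho_{i+1}$. Maps are composed on the right: $(fg)(x)=g(f(x))$.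 *)

From HB Require Import structures.
From mathcomp Require Import all_boot all_order all_algebra fraction.
Set Implicit Arguments. Unset Strict Implicit. Unset Printing Implicit Defensive.
Import Order.TTheory GRing.Theory Num.Theory.
Local Open Scope ring_scope.

Definition F := {fraction {poly int}}.
Definition p : F := @FracField.tofrac _ ('X : {poly int}).

(* M has basis e_1..e_n, f_1..f_n; in 'I_(n+n), e_j has index j-1 and
   f_j has index n+j-1 (j is 1-based). *)
Definition eidx (n j : nat) : nat := j.-1.
Definition fidx (n j : nat) : nat := n + j.-1.

(* Endomorphisms are matrices acting on ROW vectors: row r of the matrix is the
   image of the r-th basis vector.  Hence (fg)(x) = g(f(x)) corresponds to the
   matrix product Theta(f) *m Theta(g), as in the paper's convention. *)

Definition thetaS (n i : nat) : 'M[F]_(n + n) :=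
  \matrix_(r, c)
    if val r == eidx n i then
      ((val c == eidx n i.+1)%:R + (val c == fidx n i.+1)%:R * p)
    else if val r == eidx n i.+1 then
      ((val c == eidx n i)%:R - (val c == fidx n i.+1)%:R * p)
    else (r == c)%:R.

Definition thetaR (n i : nat) : 'M[F]_(n + n) :=
  \matrix_(r, c)
    if val r == eidx n i then (val c == eidx n i.+1)%:R
    else if val r == eidx n i.+1 then (val c == eidx n i)%:R
    else if val r == fidx n i then (val c == fidx n i.+1)%:R
    else if val r == fidx n i.+1 then (val c == fidx n i)%:R
    else (r == c)%:R.

(* The images satisfy all defining relations of FVB_n, so (von Dyck) the
   assignment extends to a homomorphism FVB_n -> Aut(M). *)
Definition FVB_relations (n : nat) : Prop :=
  (forall i, 1 <= i < n ->
      thetaS n i \in unitmx /\ thetaR n i \in unitmx)%N /\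
  (forall i j, 1 <= i < n -> 1 <= j < n -> (2 <= `|(i:int) - (j:int)|)%N ->
      [/\ thetaS n i *m thetaS n j = thetaS n j *m thetaS n i,
          thetaR n i *m thetaR n j = thetaR n j *m thetaR n i &
          thetaS n i *m thetaR n j = thetaR n j *m thetaS n i])%N /\
  (forall i, 1 <= i -> i.+1 < n ->
      [/\ thetaS n i *m thetaS n i.+1 *m thetaS n i
            = thetaS n i.+1 *m thetaS n i *m thetaS n i.+1,
          thetaR n i *m thetaR n i.+1 *m thetaR n i
            = thetaR n i.+1 *m thetaR n i *m thetaR n i.+1 &
          thetaR n i *m thetaR n i.+1 *m thetaS n i
            = thetaS n i.+1 *m thetaR n i *m thetaR n i.+1])%N /\
  (forall i, 1 <= i < n ->
      thetaR n i *m thetaR n i = 1%:M /\ thetaS n i *m thetaS n i = 1%:M)%N.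

From HB Require Import structures.
From mathcomp Require Import all_boot all_order all_algebra fraction.
From mathcomp Require Import zify ring.
Set Implicit Arguments. Unset Strict Implicit.
Import GRing.Theory.
Local Open Scope ring_scope.

(* Row r of a matrix is the image of the r-th basis vector, and the images of
   basis vectors under Theta(sigma_i), Theta(rho_i) are short explicit
   combinations of basis vectors.  So each relation of FVB_n only has to be
   checked on basis vectors, where it reduces to a case distinction on indices
   and a polynomial identity in p.  The forbidden relation already fails on
   f_i: every Theta(sigma_j) fixes all the f's, so rho_i sigma_(i+1) sigma_i
   sends f_i to f_(i+1), whereas sigma_(i+1) sigma_i rho_(i+1) fixes f_i. *)

Section BasisVectors.
Variables (R : nzRingType) (N : nat).

(* Indexed by nat, with junk value 0 for m >= N, so no range proofs are needed. *)
Definition basis_vec (m : nat) : 'rV[R]_N := \row_c (val c == m)%:R.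

Lemma basis_vec_delta (k : 'I_N) : basis_vec k = delta_mx 0 k.
Proof. by apply/rowP => c; rewrite !mxE eqxx. Qed.

Lemma mul_basis_vec (k : 'I_N) (A : 'M[R]_N) : basis_vec k *m A = row k A.
Proof. by rewrite basis_vec_delta -rowE. Qed.

Lemma basis_vec_out m : (N <= m)%N -> basis_vec m = 0.
Proof.
by move=> le_N_m; apply/rowP => -[c lt_c_N]; rewrite !mxE; case: eqP => //= c_m; lia.
Qed.

Lemma eq_mx_basis (A B : 'M[R]_N) :
  (forall m, basis_vec m *m A = basis_vec m *m B) -> A = B.
Proof. by move=> eqAB; apply/row_matrixP => k; rewrite -!mul_basis_vec eqAB. Qed.

Lemma basis_vec_inj m1 m2 :
  (m1 < N)%N -> basis_vec m1 = basis_vec m2 -> m1 = m2.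
Proof.
move=> lt_m1_N /rowP/(_ (Ordinal lt_m1_N)); rewrite !mxE eqxx /=.
by case: eqP => // _ /eqP; rewrite oner_eq0.
Qed.

End BasisVectors.

Ltac decide_nat_eqs :=
  repeat match goal with
  | |- context[(?a == ?b :> nat)] =>
     first [ have -> : (a == b) = true by apply/eqP; lia
           | have -> : (a == b) = false by apply/eqP; lia
           | case: (@eqP _ a b) => ?; try subst ]
  end; cbv iota beta.

Ltac expand_on_basis rules :=
  rewrite ?mulmxA;
  repeat progress (rules; decide_nat_eqs;
                   rewrite ?mulmxDl ?mulmxBl ?mulNmx -?scalemxAl).

Ltac check_on_basis rules :=
  apply: eq_mx_basis => m; rewrite ?mulmx1; expand_on_basis rules;
  apply/rowP => -[c lt_c]; rewrite /basis_vec !mxE /=; decide_nat_eqs;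
  try ring.

Section Theta.
Variable n : nat.
Local Notation b := (basis_vec F (n + n)).

Lemma basis_vec_thetaS i m : (1 <= i < n)%N ->
  b m *m thetaS n i =
    if m == i.-1 then b i + p *: b (n + i)
    else if m == i then b i.-1 - p *: b (n + i)
    else b m.
Proof.
move=> Hi; case: (ltnP m (n + n)) => [lt_m_2n | le_2n_m]; last first.
  by rewrite basis_vec_out // mul0mx; decide_nat_eqs.
rewrite (mul_basis_vec (Ordinal lt_m_2n)); apply/rowP => c.
rewrite !mxE /eidx /fidx /=.
by case: ifP => _; [|case: ifP => _]; rewrite !mxE // ?[p * _]mulrC // eq_sym.
Qed.

Lemma basis_vec_thetaR i m : (1 <= i < n)%N ->
  b m *m thetaR n i =
    if m == i.-1 then b i
    else if m == i then b i.-1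
    else if m == n + i.-1 then b (n + i)
    else if m == n + i then b (n + i.-1)
    else b m.
Proof.
move=> Hi; case: (ltnP m (n + n)) => [lt_m_2n | le_2n_m]; last first.
  by rewrite basis_vec_out // mul0mx; decide_nat_eqs.
rewrite (mul_basis_vec (Ordinal lt_m_2n)); apply/rowP => c.
rewrite !mxE /eidx /fidx /=.
by do 4 (case: ifP => _; first by rewrite !mxE); rewrite !mxE eq_sym.
Qed.

Lemma thetaS_fixes_f i j : (1 <= i < n)%N -> b (n + j) *m thetaS n i = b (n + j).
Proof. by move=> Hi; rewrite basis_vec_thetaS //; decide_nat_eqs. Qed.

Lemma thetaS_sqr i : (1 <= i < n)%N -> thetaS n i *m thetaS n i = 1%:M.
Proof. by move=> Hi; check_on_basis ltac:(rewrite ?(basis_vec_thetaS _ Hi)). Qed.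

Lemma thetaR_sqr i : (1 <= i < n)%N -> thetaR n i *m thetaR n i = 1%:M.
Proof. by move=> Hi; check_on_basis ltac:(rewrite ?(basis_vec_thetaR _ Hi)). Qed.

Section FarCommutation.
Variables i j : nat.
Hypotheses (Hi : (1 <= i < n)%N) (Hj : (1 <= j < n)%N).
Hypothesis far_ij : (2 <= `|(i:int) - (j:int)|)%N.

Lemma thetaS_thetaS_far : thetaS n i *m thetaS n j = thetaS n j *m thetaS n i.
Proof.
by check_on_basis ltac:(rewrite ?(basis_vec_thetaS _ Hi) ?(basis_vec_thetaS _ Hj)).
Qed.

Lemma thetaR_thetaR_far : thetaR n i *m thetaR n j = thetaR n j *m thetaR n i.
Proof.
by check_on_basis ltac:(rewrite ?(basis_vec_thetaR _ Hi) ?(basis_vec_thetaR _ Hj)).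
Qed.

Lemma thetaS_thetaR_far : thetaS n i *m thetaR n j = thetaR n j *m thetaS n i.
Proof.
by check_on_basis ltac:(rewrite ?(basis_vec_thetaS _ Hi) ?(basis_vec_thetaR _ Hj)).
Qed.

End FarCommutation.

Section Adjacent.
Variable i : nat.
Hypotheses (i_ge1 : (1 <= i)%N) (lt_i1_n : (i.+1 < n)%N).

Let Hi : (1 <= i < n)%N. Proof. lia. Qed.
Let Hi1 : (1 <= i.+1 < n)%N. Proof. lia. Qed.

Lemma thetaS_braid :
  thetaS n i *m thetaS n i.+1 *m thetaS n i
    = thetaS n i.+1 *m thetaS n i *m thetaS n i.+1.
Proof.
by check_on_basis ltac:(rewrite ?(basis_vec_thetaS _ Hi) ?(basis_vec_thetaS _ Hi1)).
Qed.

Lemma thetaR_braid :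
  thetaR n i *m thetaR n i.+1 *m thetaR n i
    = thetaR n i.+1 *m thetaR n i *m thetaR n i.+1.
Proof.
by check_on_basis ltac:(rewrite ?(basis_vec_thetaR _ Hi) ?(basis_vec_thetaR _ Hi1)).
Qed.

Lemma thetaR_mixed_braid :
  thetaR n i *m thetaR n i.+1 *m thetaS n i
    = thetaS n i.+1 *m thetaR n i *m thetaR n i.+1.
Proof.
by check_on_basis ltac:(rewrite ?(basis_vec_thetaR _ Hi) ?(basis_vec_thetaR _ Hi1)
                                ?(basis_vec_thetaS _ Hi) ?(basis_vec_thetaS _ Hi1)).
Qed.

Lemma forbidden_relation_fails :
  thetaR n i *m thetaS n i.+1 *m thetaS n i
    <> thetaS n i.+1 *m thetaS n i *m thetaR n i.+1.
Proof.
have lhs_fi : b (n + i.-1) *m (thetaR n i *m thetaS n i.+1 *m thetaS n i)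
              = b (n + i).
  by rewrite !mulmxA basis_vec_thetaR //; decide_nat_eqs; rewrite !thetaS_fixes_f.
have rhs_fi : b (n + i.-1) *m (thetaS n i.+1 *m thetaS n i *m thetaR n i.+1)
              = b (n + i.-1).
  by rewrite !mulmxA !thetaS_fixes_f // basis_vec_thetaR //; decide_nat_eqs.
move=> /(congr1 (mulmx (b (n + i.-1)))); rewrite lhs_fi rhs_fi.
by move=> /basis_vec_inj; lia.
Qed.

End Adjacent.

End Theta.

Theorem theorem2 (n : nat) :
  FVB_relations n /\
  (3 <= n -> forall i, 1 <= i <= n - 2 ->
     thetaR n i *m thetaS n i.+1 *m thetaS n i
       <> thetaS n i.+1 *m thetaS n i *m thetaR n i.+1)%N.
Proof.
split; last by move=> n_ge3 i Hi; apply: forbidden_relation_fails; lia.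
split.
  move=> i Hi; split.
    by case: (mulmx1_unit (thetaS_sqr Hi)).
  by case: (mulmx1_unit (thetaR_sqr Hi)).
split.
  by move=> i j Hi Hj far_ij; split;
    [exact: thetaS_thetaS_far | exact: thetaR_thetaR_far | exact: thetaS_thetaR_far].
split.
  by move=> i i_ge1 lt_i1_n; split;
    [exact: thetaS_braid | exact: thetaR_braid | exact: thetaR_mixed_braid].
by move=> i Hi; split; [exact: thetaR_sqr | exact: thetaS_sqr].
Qed.
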